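(* For every integer $n \geq 1$, $$P_O(n) - P_E(n) = \sum_{i \geq 1} S(i)\, p(n-i).$$
   Context: $p(m)$ is the number of partitions of $m$, with $p(0)=1$ and $p(m)=0$ for $m<0$. $P_O(n)$ (resp. $P_E(n)$) denotes the number of partitions of $n$ whose smallest part is odd (resp. even). The rank of a partition is its largest part minus its number of parts. For $i \geq 1$, $S(i)$ is the number of partitions of $i$ into distinct parts with even rank minus the number of partitions of $i$ into distinct parts with odd rank. *)

From mathcomp Require Import all_boot all_order all_algebra.
Set Implicit Arguments. Unset Strict Implicit. Unset Printing Implicit Defensive.
Import GRing.Theory Num.Theory.

Definition is_partition (n : nat) (s : seq nat) : bool :=
  [&& sorted geq s, all (fun x => 0 < x) s & sumn s == n].

Fixpoint seqs_len (n k : nat) : seq (seq nat) :=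
  if k is k'.+1 then
    flatten [seq [seq x :: t | t <- seqs_len n k'] | x <- iota 1 n]
  else [:: [::]].

(* candidate sequences: length <= n, entries in {1..n} (every partition
   of n is among them) *)
Definition candidates (n : nat) : seq (seq nat) :=
  flatten [seq seqs_len n k | k <- iota 0 n.+1].

Definition partitions (n : nat) : seq (seq nat) :=
  [seq s <- undup (candidates n) | is_partition n s].


Definition pnum (m : int) : int :=
  match m with
  | Posz k => (size (partitions k))%:Z
  | Negz _ => 0
  end.

Definition largest_part (s : seq nat) : nat := foldr maxn 0 s.
Definition smallest_part (s : seq nat) : nat := foldr minn (head 0 s) s.
Definition num_parts (s : seq nat) : nat := size s.

Definition rank (s : seq nat) : int := (largest_part s)%:Z - (num_parts s)%:Z.

Definition P_O (n : nat) : nat :=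
  count (fun s => odd (smallest_part s)) (partitions n).
Definition P_E (n : nat) : nat :=
  count (fun s => ~~ odd (smallest_part s)) (partitions n).

Definition Sd (i : nat) : int :=
  (count (fun s => uniq s && ~~ odd `|rank s|%N) (partitions i))%:Z
  - (count (fun s => uniq s && odd `|rank s|%N) (partitions i))%:Z.

From mathcomp Require Import all_boot all_order all_algebra zify.
Import GRing.Theory Num.Theory.
Set Implicit Arguments. Unset Strict Implicit. Unset Printing Implicit Defensive.

(* Write [pnum_ge m N] for the number of partitions of [N] whose parts are all at least [m].
   Deleting one copy of the smallest part gives
   [pnum_ge m N = pnum_ge m.+1 N + pnum_ge m (N - m)], hence
   P_O(n) - P_E(n) = sum_m (-1)^(m+1) pnum_ge m (n - m), and inclusion-exclusion over the
   forbidden parts 1..m-1 gives pnum_ge m N = sum_T (-1)^|T| p(N - |T|), T ranging over the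
   sets of distinct parts < m. Grouping the distinct-part partitions t = m :: T counted by S
   according to their largest part m, whose rank has the parity of m + 1 + |T|, turns
   sum_i S(i) p(n - i) into the same double sum. *)


Lemma mem_leq_sumn (s : seq nat) x : x \in s -> x <= sumn s.
Proof.
elim: s => //= y s IHs; rewrite inE => /predU1P [-> | /IHs]; first exact: leq_addr.
by move/leq_trans; apply; apply: leq_addl.
Qed.

Lemma leq_size_sumn (s : seq nat) : all (leq 1) s -> size s <= sumn s.
Proof. by elim: s => //= x s IHs /andP [x_gt0 /IHs]; rewrite -add1n; apply: leq_add. Qed.

Lemma sorted_geq_rcons (s : seq nat) x :
  sorted geq (rcons s x) = sorted geq s && all (leq x) s.
Proof.
rewrite -rev_sorted rev_rcons /= path_sortedE; last exact: leq_trans.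
by rewrite all_rev rev_sorted andbC.
Qed.

Lemma gtn_sorted_uniq_geq (s : seq nat) : sorted gtn s = uniq s && sorted geq s.
Proof. by rewrite -rev_sorted ltn_sorted_uniq_leq rev_uniq rev_sorted. Qed.

Lemma mem_seqs_len n k s :
  size s = k -> all (fun x => 0 < x <= n) s -> s \in seqs_len n k.
Proof.
elim: s k => [|x s IHs] [|k] //= [sz_s] /andP [x_in s_in].
apply/flatten_mapP; exists x; first by rewrite mem_iota add1n.
exact/map_f/IHs.
Qed.

Lemma mem_partitions n s : (s \in partitions n) = is_partition n s.
Proof.
rewrite mem_filter mem_undup andb_idr // => /and3P [_ s_pos /eqP sum_s].
apply/flatten_mapP; exists (size s); first by rewrite mem_iota ltnS -sum_s leq_size_sumn.
apply: mem_seqs_len => //; apply/allP => x x_s.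
by rewrite (allP s_pos) //= -sum_s mem_leq_sumn.
Qed.

Lemma uniq_partitions n : uniq (partitions n).
Proof. by rewrite filter_uniq // undup_uniq. Qed.

Lemma partitions_neq_nil n s : 0 < n -> s \in partitions n -> s != [::].
Proof.
move=> n_gt0; rewrite mem_partitions => /and3P [_ _].
by case: s => // /eqP n0; rewrite -n0 in n_gt0.
Qed.

Lemma smallest_part_ge m s : s != [::] -> (m <= smallest_part s) = all (leq m) s.
Proof.
case: s => // x s _; rewrite /smallest_part /=.
have leq_foldr_min y t : (m <= foldr minn y t) = (m <= y) && all (leq m) t.
  by elim: t => /= [|z t IHt]; rewrite ?andbT // leq_min IHt andbCA.
by rewrite leq_min leq_foldr_min andbA andbb.
Qed.

(* Removing one copy of the smallest part [m] is a bijection onto the partitions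
   of [k - m] with all parts at least [m]. *)
Lemma partitions_min_part m k : 0 < m -> m <= k ->
  perm_eq [seq t <- partitions k | all (leq m) t && ~~ all (leq m.+1) t]
          [seq rcons s m | s <- partitions (k - m) & all (leq m) s].
Proof.
move=> m_gt0 le_mk; apply: uniq_perm.
- exact/filter_uniq/uniq_partitions.
- rewrite map_inj_uniq; first exact/filter_uniq/uniq_partitions.
  by move=> s1 s2 /eqP; rewrite eqseq_rcons eqxx andbT => /eqP.
move=> t; rewrite mem_filter mem_partitions; apply/idP/mapP.
- case/lastP: t => [|s x] /andP [/andP [t_ge]] /allPn [y t_y]; first by [].
  rewrite -ltnNge ltnS => le_ym /and3P [].
  rewrite sorted_geq_rcons all_rcons sumn_rcons => /andP [s_sorted s_ge_x].
  move=> /andP [_ s_pos] /eqP sum_t.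
  move: t_ge; rewrite all_rcons => /andP [le_mx s_ge_m].
  have x_eq_m : x = m.
    apply/eqP; rewrite eqn_leq le_mx andbT.
    move: t_y; rewrite mem_rcons inE => /predU1P [<- // | s_y].
    exact: leq_trans (allP s_ge_x y s_y) le_ym.
  exists s; last by rewrite x_eq_m.
  rewrite mem_filter s_ge_m mem_partitions /is_partition s_sorted s_pos.
  by rewrite -sum_t x_eq_m addnK /=.
- case=> s; rewrite mem_filter mem_partitions => /andP [s_ge_m] /and3P [s_sorted s_pos].
  move=> /eqP sum_s ->; rewrite /is_partition sorted_geq_rcons s_sorted s_ge_m.
  by rewrite !all_rcons leqnn s_ge_m s_pos m_gt0 sumn_rcons sum_s subnK //= ltnn eqxx.
Qed.

Local Open Scope ring_scope.

Lemma sum_sign_count (R : pzRingType) T (l : seq T) (h : T -> nat) :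
  \sum_(s <- l) (-1) ^+ h s =
  (count (fun s => ~~ odd (h s)) l)%:R - (count (fun s => odd (h s)) l)%:R :> R.
Proof.
elim: l => [|x l IHl]; first by rewrite big_nil subrr.
rewrite big_cons IHl /= -signr_odd !natrD.
by case: (odd (h x)); rewrite /= ?expr0 ?expr1 ?add0r; [rewrite opprD addrCA | rewrite addrA].
Qed.

Lemma sum_nat_fibers (R : nmodType) T (l : seq T) (f : T -> nat) (G : T -> R) a b :
  \sum_(a <= i < b) \sum_(t <- l | f t == i) G t = \sum_(t <- l | (a <= f t < b)%N) G t.
Proof.
under eq_bigr do rewrite big_mkcond; rewrite exchange_big [RHS]big_mkcond.
apply: eq_bigr => t _; case: ifP => [f_in | f_out].
  rewrite (bigD1_seq (f t)) ?mem_index_iota ?iota_uniq //= eqxx big1 ?addr0 // => i.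
  by rewrite eq_sym => /negbTE ->.
rewrite big_seq big1 // => i; rewrite mem_index_iota.
by case: eqP => // <-; rewrite f_out.
Qed.

Definition pnum_ge (m : nat) (N : int) : int :=
  if N is Posz k then (count (all (leq m)) (partitions k))%:Z else 0.

Lemma pnum_ge_lt0 m N : N < 0 -> pnum_ge m N = 0.
Proof. by case: N. Qed.

Lemma pnum_lt0 N : N < 0 -> pnum N = 0.
Proof. by case: N. Qed.

Lemma pnum_ge1 N : pnum_ge 1 N = pnum N.
Proof.
case: N => //= k; rewrite -count_predT; congr Posz; apply: eq_in_count => s.
by rewrite mem_partitions => /and3P [].
Qed.

Lemma count_min_part m k : (0 < m)%N ->
  (count (fun t => all (leq m) t && ~~ all (leq m.+1) t) (partitions k))%:Z =
  pnum_ge m (k%:Z - m%:Z).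
Proof.
move=> m_gt0; have [le_mk | lt_km] := leqP m k.
  rewrite subzn // -size_filter (perm_size (partitions_min_part m_gt0 le_mk)).
  by rewrite size_map size_filter.
rewrite pnum_ge_lt0 ?subr_lt0 ?ltz_nat //; apply/eqP; rewrite eqz_nat -leqn0 leqNgt.
rewrite -has_count; apply/hasPn => t; rewrite mem_partitions => /and3P [_ _ /eqP sum_t].
apply/negP => /andP [t_ge /allPn [x t_x]]; rewrite -ltnNge ltnS => le_xm.
have := leq_trans (allP t_ge x t_x) (mem_leq_sumn t_x).
by rewrite sum_t leqNgt lt_km.
Qed.

Lemma pnum_ge_rec m N : (0 < m)%N ->
  pnum_ge m N = pnum_ge m.+1 N + pnum_ge m (N - m%:Z).
Proof.
move=> m_gt0; case: N => [k | k]; last by rewrite !pnum_ge_lt0 ?addr0 // NegzE; lia.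
rewrite -count_min_part //= -PoszD -size_filter -(count_predC (all (leq m.+1))).
rewrite !(count_filter _ (all (leq m))); congr (Posz (_ + _)).
  apply: eq_count => t /=; apply/andb_idr => /allP t_ge.
  by apply/allP => x /t_ge /ltnW.
by apply: eq_count => t; rewrite /= andbC.
Qed.

Fixpoint strict_seqs (k : nat) : seq (seq nat) :=
  if k is k'.+1 then strict_seqs k' ++ map (cons k) (strict_seqs k') else [:: [::]].

Lemma mem_strict_seqs k t :
  (t \in strict_seqs k) = sorted gtn t && all (fun x => 0 < x <= k)%N t.
Proof.
have gtn_trans : transitive gtn by move=> ? ? ? /= ? /ltn_trans; apply.
have bound_le k' x s : path gtn x s -> (x <= k'.+1)%N ->
    all (fun y => 0 < y <= k')%N s = all (fun y => 0 < y <= k'.+1)%N s.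
  rewrite path_sortedE // => /andP [/allP s_lt _] le_x; apply: eq_in_all => y s_y.
  have := leq_trans (s_lt y s_y) le_x; rewrite ltnS => le_yk.
  by rewrite le_yk (leqW le_yk).
elim: k t => [|k IHk] [|x t] //=; first by case: x => [|x]; rewrite inE /= ?andbF.
  by rewrite mem_cat IHk.
have mem_map_cons y l : (x :: t \in map (cons y) l) = (x == y) && (t \in l).
  by apply/mapP/andP => [[s s_l [-> ->]] | [/eqP -> t_l]]; last exists t.
rewrite mem_cat IHk /= mem_map_cons; case: (ltngtP x k.+1) => [lt_xk | lt_kx | ->] /=.
- move: (lt_xk); rewrite ltnS => ->; rewrite orbF andbT.
  case: (boolP (path _ x t)) => //= /(bound_le k) -> //; exact: ltnW.
- by rewrite orbF (leqNgt x k) (ltnW lt_kx) /= ?andbF.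
rewrite ltnn andbF /= IHk (path_sortedE gtn_trans) -andbA andbCA -all_predI.
congr (_ && _); apply: eq_all => y /=; rewrite ltnS.
case: (leqP y k) => [le_yk | _]; first by rewrite (leqW le_yk) !andbT.
by rewrite !andbF.
Qed.

Lemma uniq_strict_seqs k : uniq (strict_seqs k).
Proof.
elim: k => //= k IHk; rewrite cat_uniq IHk map_inj_uniq //=; last by move=> ? ? [].
rewrite IHk andbT; apply/hasPn => _ /mapP [t _ ->].
by rewrite mem_strict_seqs /= ltnn andbF.
Qed.

(* Inclusion-exclusion over the parts [1..k] that a partition of [N] is forbidden to use. *)
Lemma pnum_ge_strict_seqs k N :
  pnum_ge k.+1 N = \sum_(T <- strict_seqs k) (-1) ^+ size T * pnum (N - (sumn T)%:Z).
Proof.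
elim: k N => [|k IHk] N; first by rewrite big_seq1 mul1r subr0 pnum_ge1.
rewrite /= big_cat big_map /= -IHk (pnum_ge_rec N (ltn0Sn k)) (IHk (N - _)).
rewrite -addrA -big_split big1 ?addr0 // => T _ /=.
by rewrite exprS mulN1r mulNr PoszD opprD addrA subrr.
Qed.

Lemma big_strict_seqs_largest (R : nmodType) (h : seq nat -> R) k :
  \sum_(t <- strict_seqs k) h t =
  h [::] + \sum_(1 <= m < k.+1) \sum_(T <- strict_seqs m.-1) h (m :: T).
Proof.
elim: k => [|k IHk]; first by rewrite big_seq1 big_geq ?addr0.
by rewrite /= big_cat big_map /= [in RHS]big_nat_recr //= IHk addrA.
Qed.

Lemma odd_distn a b : odd `|a%:Z - b%:Z|%N = odd (a + b)%N.
Proof.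
have [le_ab | /ltnW le_ba] := leqP a b.
  by rewrite distnEr // oddB // oddD addbC.
by rewrite distnEl // oddB // oddD.
Qed.

Lemma sign_rank_cons m T : all (gtn m) T ->
  (-1) ^+ `|rank (m :: T)|%N = (-1) ^+ m.+1 * (-1) ^+ size T :> int.
Proof.
move=> T_lt_m; have largest_m : largest_part (m :: T) = m.
  apply/maxn_idPl; elim: T T_lt_m => //= x T IHT /andP [/ltnW le_xm /IHT].
  by rewrite geq_max le_xm.
rewrite /rank largest_m /num_parts -signr_odd odd_distn signr_odd.
by rewrite /= addnS -addSn exprD.
Qed.

Lemma Sd_strict_seqs i K : (i <= K)%N ->
  Sd i = \sum_(t <- strict_seqs K | sumn t == i) (-1) ^+ `|rank t|%N.
Proof.
move=> le_iK.
have strict_partitions : perm_eq [seq s <- partitions i | uniq s]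
                                 [seq t <- strict_seqs K | sumn t == i].
  apply: uniq_perm => [||s]; first exact/filter_uniq/uniq_partitions.
    exact/filter_uniq/uniq_strict_seqs.
  rewrite mem_filter mem_partitions [in RHS]mem_filter mem_strict_seqs gtn_sorted_uniq_geq.
  rewrite /is_partition; have [sum_s | _] := eqVneq (sumn s) i; last by rewrite !andbF.
  have -> : all (fun x => 0 < x <= K)%N s = all (leq 1) s.
    apply: eq_in_all => x s_x; apply: andb_idr => _.
    rewrite -sum_s in le_iK; exact: leq_trans (mem_leq_sumn s_x) le_iK.
  by rewrite andbT /= andbA.
rewrite -big_filter -(perm_big _ strict_partitions) sum_sign_count.
rewrite !(count_filter _ uniq) !natz.
by congr (Posz _ - Posz _); apply: eq_count => s; rewrite /= andbC.
Qed.

Lemma count_smallest_part n m : (0 < n)%N -> (0 < m)%N ->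
  (count (fun s => smallest_part s == m) (partitions n))%:Z = pnum_ge m (n%:Z - m%:Z).
Proof.
move=> n_gt0 m_gt0; rewrite -count_min_part //; congr Posz; apply: eq_in_count => s s_n.
have s_nil := partitions_neq_nil n_gt0 s_n.
by rewrite eqn_leq andbC (leqNgt (smallest_part s)) !smallest_part_ge.
Qed.

Lemma P_O_sub_P_E n N : (0 < n < N)%N ->
  (P_O n)%:Z - (P_E n)%:Z = \sum_(1 <= m < N) (-1) ^+ m.+1 * pnum_ge m (n%:Z - m%:Z).
Proof.
case/andP=> n_gt0 lt_nN.
have smallest_part_range s : s \in partitions n -> (1 <= smallest_part s < N)%N.
  move=> s_n; have s_nil := partitions_neq_nil n_gt0 s_n.
  rewrite smallest_part_ge //; move: s_n s_nil; rewrite mem_partitions.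
  case/and3P=> _ -> /eqP sum_s; case: s sum_s => //= x s sum_s _.
  rewrite /smallest_part /= (leq_ltn_trans _ lt_nN) // -sum_s.
  exact: leq_trans (geq_minl _ _) (leq_addr _ _).
have := sum_sign_count int (partitions n) smallest_part; rewrite !natz => sign_sum.
rewrite /P_O /P_E -opprB -sign_sum.
have -> : \sum_(s <- partitions n) (-1) ^+ smallest_part s =
          \sum_(s <- partitions n | (1 <= smallest_part s < N)%N)
            (-1) ^+ smallest_part s :> int.
  rewrite big_seq [RHS]big_seq_cond; apply: eq_bigl => s.
  by case: (boolP (s \in _)) => // /smallest_part_range ->.
rewrite -sum_nat_fibers -sumrN; apply: eq_big_nat => m /andP [m_gt0 _].
rewrite -count_smallest_part // (eq_bigr (fun _ => (-1) ^+ m)) => [|s /eqP -> //].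
by rewrite big_const_seq iter_addr_0 -mulr_natr natz exprS mulN1r mulNr.
Qed.

Lemma sum_Sd_mul_pnum n K :
  \sum_(1 <= i < K.+1) Sd i * pnum (n%:Z - i%:Z) =
  \sum_(t <- strict_seqs K | (1 <= sumn t < K.+1)%N)
     (-1) ^+ `|rank t|%N * pnum (n%:Z - (sumn t)%:Z).
Proof.
rewrite -sum_nat_fibers; apply: eq_big_nat => i /andP [_]; rewrite ltnS => le_iK.
rewrite (Sd_strict_seqs le_iK) mulr_suml.
by apply: eq_bigr => t /eqP ->.
Qed.

Lemma sum_sign_rank_strict_seqs n K : (n <= K)%N ->
  \sum_(t <- strict_seqs K | (1 <= sumn t < K.+1)%N)
     (-1) ^+ `|rank t|%N * pnum (n%:Z - (sumn t)%:Z) =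
  \sum_(1 <= m < K.+1) (-1) ^+ m.+1 * pnum_ge m (n%:Z - m%:Z).
Proof.
move=> le_nK; rewrite big_mkcond big_strict_seqs_largest /= add0r.
apply: eq_big_nat => m /andP [m_gt0 _].
have := pnum_ge_strict_seqs m.-1 (n%:Z - m%:Z); rewrite prednK // => ->.
rewrite mulr_sumr; apply: eq_big_seq => T.
rewrite mem_strict_seqs => /andP [_ T_range].
have T_lt_m : all (gtn m) T.
  by apply/allP => x /(allP T_range) /andP [_]; rewrite /= -ltnS prednK.
rewrite /= (leq_trans m_gt0 (leq_addr _ _)) sign_rank_cons // PoszD opprD addrA -mulrA.
case: ifP => // /negbT; rewrite -leqNgt => lt_K_sum.
by rewrite pnum_lt0 ?mulr0 //; lia.
Qed.

Theorem theorem4 (n : nat) (hn : (1 <= n)%N) (N : nat) (hN : (n < N)%N) :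
  (P_O n)%:Z - (P_E n)%:Z = \sum_(1 <= i < N) Sd i * pnum (n%:Z - i%:Z).
Proof.
case: N hN => // K lt_nK.
rewrite sum_Sd_mul_pnum sum_sign_rank_strict_seqs //.
by rewrite (P_O_sub_P_E (N := K.+1)) // hn.
Qed.
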